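(* Let $\lambda_1-\lambda_2=2$ with $\lambda_2\ge1$, and $n=\lambda_1+\lambda_2$. If $(\mu_1,\mu_2)$ is a partition of $n$ with two positive parts such that there exist commuting nilpotent $n\times n$ matrices $B,A$ with $\mathrm{sh}(B)=(\lambda_1,\lambda_2)$ and $\mathrm{sh}(A)=(\mu_1,\mu_2)$, then $\mu_1=\lambda_1$ or $\mu_1=\lambda_1-1$.
   Context: $\mathbb{F}$ is an algebraically closed field of characteristic $0$ and matrices are over $\mathbb{F}$. For a nilpotent matrix $A$, $\mathrm{sh}(A)$ is the partition of $n$ given by the sizes of the Jordan blocks of its Jordan canonical form. *)

From HB Require Import structures.
From mathcomp Require Import all_boot all_order all_algebra.
Set Implicit Arguments. Unset Strict Implicit. Unset Printing Implicit Defensive.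
Import Order.TTheory GRing.Theory Num.Theory.
Local Open Scope ring_scope.

Definition is_partition_of (n : nat) (s : seq nat) : bool :=
  [&& sumn s == n, sorted geq s & all (fun x => 0 < x)%N s].

Definition block_ends (s : seq nat) : seq nat :=
  [seq sumn (take k s) | k <- iota 1 (size s)].

(* The nilpotent Jordan matrix with blocks of sizes s (in this order):
   entry (i,j) is 1 iff j = i+1 and i, i+1 lie in the same block. *)
Definition jordan_nil (F : nzRingType) (n : nat) (s : seq nat) : 'M[F]_n :=
  \matrix_(i < n, j < n)
    ((nat_of_ord j == (nat_of_ord i).+1) && ((nat_of_ord i).+1 \notin block_ends s))%:R.

Definition nilpotent_mx (F : nzRingType) (n : nat) (A : 'M[F]_n) : Prop :=
  exists k : nat, A ^+ k = 0.

Definition sh_is (F : fieldType) (n : nat) (A : 'M[F]_n) (s : seq nat) : Prop :=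
  is_partition_of n s /\
  exists P : 'M[F]_n, P \in unitmx /\ A = invmx P *m jordan_nil F n s *m P.

From mathcomp Require Import all_boot all_algebra.
From mathcomp Require Import zify.
Import GRing.Theory.
Set Implicit Arguments. Unset Strict Implicit.
Local Open Scope ring_scope.

(* Conjugating by a
   matrix that puts B in Jordan form J, A becomes a nilpotent N commuting with
   J.  For J with blocks of sizes p >= q + 2, give index i the level i + 1 in
   the first block and i - p + 2 in the second, so all levels lie in [1, p].
   Commuting with J makes N constant along diagonals within each pair of
   blocks and zero in the first column of each block outside the block starts;
   the gap p - q >= 2 moreover kills the entries (p, 0) and (p, 1).  With
   nilpotency, which kills the diagonal entries N_00 and N_pp, this shows that
   N strictly raises levels, hence N^p = 0.  Thus A^l1 = 0, so the Jordan
   matrix of type (mu1, mu2) has index at most l1, i.e. mu1 <= l1; and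
   mu1 >= mu2 with mu1 + mu2 = 2 l1 - 2 gives mu1 >= l1 - 1.
   The file first treats entries at natural indices and multiplication by a
   Jordan matrix, then the commutant of a two-block Jordan matrix, then
   conjugation, and finally derives the theorem. *)

(* Entries of square matrices addressed by natural numbers (0 outside the
   matrix), which makes index arithmetic along diagonals painless. *)
Section NatIndexedEntries.
Variable R : nzRingType.

Definition entry n (X : 'M[R]_n) (r c : nat) : R :=
  match (insub r : option 'I_n), (insub c : option 'I_n) with
  | Some i, Some j => X i j
  | _, _ => 0
  end.

Lemma entry_ord n (X : 'M[R]_n) (i j : 'I_n) : entry X i j = X i j.
Proof. by rewrite /entry !valK. Qed.

Lemma entryE n (X : 'M[R]_n) r c (hr : (r < n)%N) (hc : (c < n)%N) :
  entry X r c = X (Ordinal hr) (Ordinal hc).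
Proof. exact: (entry_ord X (Ordinal hr) (Ordinal hc)). Qed.

Lemma entry_out n (X : 'M[R]_n) r c : ((n <= r) || (n <= c))%N -> entry X r c = 0.
Proof.
rewrite /entry; case/orP=> h; first by rewrite insubN // -leqNgt.
by case: (insub r) => // ?; rewrite insubN // -leqNgt.
Qed.

Lemma entry0 n r c : entry (0 : 'M[R]_n) r c = 0.
Proof.
case: (ltnP r n) => hr; last by rewrite entry_out ?hr.
case: (ltnP c n) => hc; last by rewrite entry_out ?hc ?orbT.
by rewrite entryE mxE.
Qed.

Lemma entry1 n r c : (r < n)%N -> (c < n)%N -> entry (1 : 'M[R]_n) r c = (r == c)%:R.
Proof. by move=> hr hc; rewrite entryE -idmxE mxE. Qed.

Lemma entry_mul n (X Y : 'M[R]_n) r c : (r < n)%N -> (c < n)%N ->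
  entry (X *m Y) r c = \sum_(m < n) entry X r m * entry Y m c.
Proof.
move=> hr hc; rewrite -[r]/(nat_of_ord (Ordinal hr)) -[c]/(nat_of_ord (Ordinal hc)).
by rewrite entry_ord mxE; apply: eq_bigr => m _; rewrite !entry_ord.
Qed.

Lemma entry_eq0 n (X : 'M[R]_n) :
  (forall r c, (r < n)%N -> (c < n)%N -> entry X r c = 0) -> X = 0.
Proof. by move=> h; apply/matrixP => i j; rewrite -entry_ord h ?mxE. Qed.

Lemma entry_jordan n s r c : (r < n)%N -> (c < n)%N ->
  entry (jordan_nil R n s) r c = ((c == r.+1) && (r.+1 \notin block_ends s))%:R.
Proof. by move=> hr hc; rewrite entryE mxE. Qed.

Lemma entry_mulmx_jordan n s (X : 'M[R]_n) r c : (c < n)%N ->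
  entry (X *m jordan_nil R n s) r c =
  if (0 < c)%N && (c \notin block_ends s) then entry X r c.-1 else 0.
Proof.
move=> hc; case: (ltnP r n) => hr; last by rewrite !entry_out ?hr //; case: ifP.
rewrite entry_mul //; case: c hc => [|c] hc /=.
  by rewrite big1 // => m _; rewrite entry_jordan // mulr0.
have hc' : (c < n)%N by apply: ltnW.
rewrite (big_only1 (Ordinal hc')) //= => [|m hm _].
  by rewrite entry_jordan // eqxx; case: (_ \notin _); rewrite ?mulr1 ?mulr0.
rewrite entry_jordan //; case: eqP => [[e]|]; last by rewrite mulr0.
by move: hm; rewrite -(inj_eq val_inj) /= e eqxx.
Qed.

Lemma entry_jordan_mulmx n s (X : 'M[R]_n) r c : (c < n)%N ->
  entry (jordan_nil R n s *m X) r c =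
  if (r.+1 < n)%N && (r.+1 \notin block_ends s) then entry X r.+1 c else 0.
Proof.
move=> hc; case: (ltnP r n) => hr; last first.
  by rewrite entry_out ?hr //; case: ifP => // /andP[h _]; lia.
rewrite entry_mul //; case: (ltnP r.+1 n) => hr1 /=; last first.
  rewrite big1 // => m _; rewrite entry_jordan //.
  by case: eqP => [e|]; [have := ltn_ord m; lia | rewrite mul0r].
rewrite (big_only1 (Ordinal hr1)) //= => [|m hm _].
  by rewrite entry_jordan // eqxx; case: (_ \notin _); rewrite ?mul1r ?mul0r.
rewrite entry_jordan //; case: eqP => [e|]; last by rewrite mul0r.
by move: hm; rewrite -(inj_eq val_inj) /= e eqxx.
Qed.

Lemma block_ends_ge x s b : b \in block_ends (x :: s) -> (x <= b)%N.
Proof.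
case/mapP=> j; rewrite mem_iota => /andP[j_gt0 _] ->.
by case: j j_gt0 => //= j _; rewrite leq_addr.
Qed.

Lemma entry_jordan_pow_first_block n x s k : (k < x)%N -> (x <= n)%N ->
  entry (jordan_nil R n (x :: s) ^+ k) 0 k = 1.
Proof.
move=> + le_xn; elim: k => [|k IH] lt_kx; first by rewrite expr0 entry1 //; lia.
rewrite exprSr -mulmxE entry_mulmx_jordan; last by lia.
have /negPf-> : k.+1 \notin block_ends (x :: s).
  by apply: contraTN lt_kx => /block_ends_ge; rewrite -ltnNge.
by rewrite /= IH //; lia.
Qed.

Lemma jordan_nilpotency_index n x s k : (x <= n)%N ->
  jordan_nil R n (x :: s) ^+ k = 0 -> (x <= k)%N.
Proof.
move=> le_xn Jk0; rewrite leqNgt; apply/negP => lt_kx.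
have := entry_jordan_pow_first_block s lt_kx le_xn.
by rewrite Jk0 entry0 => /esym/eqP; rewrite oner_eq0.
Qed.

End NatIndexedEntries.

Section TwoBlockCommutant.
Variable R : nzRingType.
Variables p q : nat.
Hypothesis q_gt0 : (0 < q)%N.
Hypothesis gap : (q.+2 <= p)%N.
Local Notation n := (p + q)%N.
Local Notation J := (jordan_nil R n [:: p; q]).
Variable N : 'M[R]_n.
Hypothesis commNJ : N *m J = J *m N.

Lemma block_ends_two : block_ends [:: p; q] = [:: p; n].
Proof. by rewrite /block_ends /= !addn0. Qed.

Lemma commute_entry r c : (r < n)%N -> (c < n)%N ->
  (if (0 < c)%N && (c \notin [:: p; n]) then entry N r c.-1 else 0) =
  (if (r.+1 < n)%N && (r.+1 \notin [:: p; n]) then entry N r.+1 c else 0).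
Proof.
by move=> hr hc; rewrite -block_ends_two -entry_mulmx_jordan // commNJ entry_jordan_mulmx.
Qed.

Lemma entry_diag_step r c : (r.+1 < n)%N -> (c.+1 < n)%N -> r.+1 != p -> c.+1 != p ->
  entry N r.+1 c.+1 = entry N r c.
Proof.
move=> hr hc hrp hcp; have := commute_entry (ltnW hr) hc.
by rewrite !inE /= hr (negbTE hrp) (negbTE hcp) !(ltn_eqF hr, ltn_eqF hc) /= => ->.
Qed.

Lemma entry_block_start r c : (c < n)%N -> (c == 0)%N || (c == p) ->
  (r.+1 < n)%N -> r.+1 != p -> entry N r.+1 c = 0.
Proof.
move=> hc c_start hr hrp; have := commute_entry (ltnW hr) hc.
rewrite !inE /= hr (negbTE hrp) (ltn_eqF hr) /=.
by case/orP: c_start => /eqP->; rewrite ?eqxx ?andbF.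
Qed.

Lemma entry_last_row c : (c.+1 < n)%N -> c.+1 != p -> entry N n.-1 c = 0.
Proof.
move=> hc hcp; have last_lt : (n.-1 < n)%N by lia.
have := commute_entry last_lt hc.
by rewrite !inE /= (negbTE hcp) (ltn_eqF hc) prednK ?ltnn //; lia.
Qed.

Lemma entry_diag_shift k r c r' c' : r' = (r + k)%N -> c' = (c + k)%N ->
  (r' < n)%N -> (c' < n)%N -> (p <= r \/ r' < p)%N -> (p <= c \/ c' < p)%N ->
  entry N r' c' = entry N r c.
Proof.
elim: k r' c' => [|k IH] r' c' -> ->; first by rewrite !addn0.
move=> hr hc r_blk c_blk; rewrite !addnS entry_diag_step //; try (apply/eqP; lia).
by apply: IH => //; lia.
Qed.

(* The gap p - q >= 2 kills the entries (p, 0) and (p, 1): they are copies of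
   last-row entries of the second block lying strictly left of column p - 1. *)
Lemma entry_p0 : entry N p 0 = 0.
Proof.
have <- : entry N n.-1 q.-1 = 0 by apply: entry_last_row; [lia | apply/eqP; lia].
by symmetry; apply: (@entry_diag_shift q.-1); lia.
Qed.

Lemma entry_p1 : entry N p 1 = 0.
Proof.
have <- : entry N n.-1 q = 0 by apply: entry_last_row; [lia | apply/eqP; lia].
by symmetry; apply: (@entry_diag_shift q.-1); lia.
Qed.

Lemma entry_col0 r : (0 < r < n)%N -> entry N r 0 = 0.
Proof.
case: r => [|r] // /andP[_ hr].
case: (eqVneq r.+1 p) => [->|hrp]; first exact: entry_p0.
by apply: entry_block_start => //; lia.
Qed.

Lemma entry_colp r : (0 < r < n)%N -> r != p -> entry N r p = 0.
Proof.
case: r => [|r] // /andP[_ hr] hrp.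
by apply: entry_block_start; rewrite ?eqxx ?orbT //; lia.
Qed.

(* As columns 0 and p of N are almost zero, (N^k)_00 = N_00^k and
   (N^k)_pp = N_pp^k. *)
Lemma entry_pow_col0 k r : (r < n)%N ->
  entry (N ^+ k) r 0 = if r == 0%N then entry N 0 0 ^+ k else 0.
Proof.
have n_gt0 : (0 < n)%N by lia.
elim: k r => [|k IH] r hr; first by rewrite expr0 entry1 //; case: (r == 0%N).
rewrite exprSr -mulmxE entry_mul // (big_only1 (Ordinal n_gt0)) //= => [|m hm _].
  by rewrite IH //; case: (r == 0%N); rewrite ?exprSr ?mul0r.
have m_gt0 : (0 < m)%N by rewrite lt0n; rewrite -(inj_eq val_inj) in hm.
by rewrite entry_col0 ?mulr0 // m_gt0 ltn_ord.
Qed.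

Lemma entry_pow_pp k : entry (N ^+ k) p p = entry N p p ^+ k.
Proof.
have p_lt : (p < n)%N by lia.
elim: k => [|k IH]; first by rewrite expr0 entry1 ?eqxx.
rewrite exprSr -mulmxE entry_mul // (big_only1 (Ordinal p_lt)) //= => [|m hm _].
  by rewrite IH exprSr.
have hmp : nat_of_ord m != p by rewrite -(inj_eq val_inj) in hm.
case: (posnP m) => [m0|m_gt0].
  have p_gt0 : (0 < p)%N by lia.
  by rewrite m0 entry_pow_col0 // (gtn_eqF p_gt0) mul0r.
by rewrite entry_colp ?mulr0 // m_gt0 ltn_ord.
Qed.

Definition level i := if (i < p)%N then i.+1 else (i - p).+2.

(* Since q + 1 <= p, all levels lie in [1, p]. *)
Lemma level_bounds i : (i < n)%N -> (0 < level i <= p)%N.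
Proof. by move=> hi; rewrite /level; case: (ltnP i p); lia. Qed.

Section NilpotentDiagonal.
Hypothesis diag0 : entry N 0 0 = 0.
Hypothesis diagp : entry N p p = 0.

Lemma entry_level r c : (r < n)%N -> (c < n)%N -> (level c <= level r)%N ->
  entry N r c = 0.
Proof.
move=> hr hc; rewrite /level; case: (ltnP r p) => hrp; case: (ltnP c p) => hcp hl.
- rewrite (@entry_diag_shift c (r - c) 0 r c); [|lia..].
  case: (posnP (r - c)) => [->|rc_gt0] //; rewrite entry_col0 //; lia.
- rewrite (@entry_diag_shift (c - p) (r - (c - p)) p r c); [|lia..].
  by rewrite entry_colp //; [lia | apply/eqP; lia].
- case: (leqP c (r - p)) => hc2.
    rewrite (@entry_diag_shift c (r - c) 0 r c); [|lia..].
    by rewrite entry_col0 //; lia.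
  by rewrite (@entry_diag_shift c.-1 p 1 r c) ?entry_p1 //; lia.
- rewrite (@entry_diag_shift (c - p) (r - (c - p)) p r c); [|lia..].
  case: (eqVneq r c) => [<-|ne]; first by rewrite subKn.
  by rewrite entry_colp //; [lia | apply/eqP; lia].
Qed.

Lemma entry_pow_level k r c : (r < n)%N -> (c < n)%N ->
  (level c < level r + k)%N -> entry (N ^+ k) r c = 0.
Proof.
elim: k r c => [|k IH] r c hr hc hl.
  by rewrite expr0 entry1 //; case: eqP => // e; move: hl; rewrite e addn0 ltnn.
rewrite exprS -mulmxE entry_mul // big1 // => m _.
case: (leqP (level m) (level r)) => h; first by rewrite entry_level ?mul0r.
by rewrite IH ?mulr0 //; lia.
Qed.

(* Since levels lie in [1, p], N^p = 0. *)
Lemma commutant_pow_p : N ^+ p = 0.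
Proof.
apply: entry_eq0 => r c hr hc; apply: entry_pow_level => //.
by have := level_bounds hr; have := level_bounds hc; lia.
Qed.

End NilpotentDiagonal.
End TwoBlockCommutant.

Lemma nilpotent_commutant_two_blocks (R : idomainType) (p q : nat) (N : 'M[R]_(p + q)) k :
  (0 < q)%N -> (q.+2 <= p)%N ->
  N *m jordan_nil R (p + q) [:: p; q] = jordan_nil R (p + q) [:: p; q] *m N ->
  N ^+ k = 0 -> N ^+ p = 0.
Proof.
move=> q_gt0 gap commNJ Nk0.
have diag_nil (x : R) : x ^+ k = 0 -> x = 0.
  by move/eqP; rewrite expf_eq0 => /andP[_ /eqP].
have n_gt0 : (0 < p + q)%N by lia.
apply: commutant_pow_p => //; apply: diag_nil.
  by have := entry_pow_col0 q_gt0 gap commNJ k n_gt0; rewrite Nk0 entry0 eqxx.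
by rewrite -(entry_pow_pp q_gt0 gap commNJ) Nk0 entry0.
Qed.

Section Similarity.
Variables (F : fieldType) (n : nat).

Lemma conjmx_mul (V f g : 'M[F]_n) : V \in unitmx ->
  conjmx V (f *m g) = conjmx V f *m conjmx V g.
Proof. by move=> uV; rewrite conjmxM // inE stablemx_unit. Qed.

Lemma conjmxX (V f : 'M[F]_n) k : V \in unitmx ->
  conjmx V (f ^+ k) = conjmx V f ^+ k.
Proof.
move=> uV; elim: k => [|k IH]; first by rewrite !expr0 conjumx // mulmx1 mulmxV.
by rewrite !exprS -!mulmxE conjmx_mul // IH.
Qed.

Lemma sh_is_conjmx (A : 'M[F]_n) s : sh_is A s ->
  exists2 P, P \in unitmx & conjmx P A = jordan_nil F n s.
Proof. by case=> _ [P [uP ->]]; exists P; rewrite // -conjVmx // conjmxVK. Qed.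

End Similarity.

Theorem lemma3p4 (F : closedFieldType) (hF : [pchar F] =i pred0)
  (l1 l2 mu1 mu2 : nat) (hl : l1 = (l2 + 2)%N) (hl2 : (1 <= l2)%N)
  (hmu : is_partition_of (l1 + l2) [:: mu1; mu2])
  (B A : 'M[F]_(l1 + l2))
  (hBn : nilpotent_mx B) (hAn : nilpotent_mx A)
  (hcomm : B *m A = A *m B)
  (hshB : sh_is B [:: l1; l2]) (hshA : sh_is A [:: mu1; mu2]) :
  mu1 = l1 \/ mu1 = (l1 - 1)%N.
Proof.
move: hmu; rewrite /is_partition_of /= addn0 andbT.
case/and3P=> /eqP sum_mu mu2_le_mu1 _.
have [P uP JB] := sh_is_conjmx hshB.
have [Q uQ JA] := sh_is_conjmx hshA.
have [k Ak0] := hAn.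
have commNJ : conjmx P A *m jordan_nil F (l1 + l2) [:: l1; l2] =
              jordan_nil F (l1 + l2) [:: l1; l2] *m conjmx P A.
  by rewrite -JB -!conjmx_mul // hcomm.
have Nk0 : conjmx P A ^+ k = 0 by rewrite -conjmxX // Ak0 conjmx0.
have Nl1 : conjmx P A ^+ l1 = 0.
  by apply: (nilpotent_commutant_two_blocks _ _ commNJ Nk0); lia.
have Al1 : A ^+ l1 = 0.
  by rewrite -(conjmxK A uP) -conjmxX ?unitmx_inv // Nl1 conjmx0.
have Jl1 : jordan_nil F (l1 + l2) [:: mu1; mu2] ^+ l1 = 0.
  by rewrite -JA -conjmxX // Al1 conjmx0.
have mu1_le_l1 : (mu1 <= l1)%N by apply: (jordan_nilpotency_index _ Jl1); lia.
lia.
Qed.
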